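(* For each integer $r\ge2$, $$\lim_{\substack{n\in D_r\\ n\to\infty}}\frac{\mathrm{IR}(X_n)}{\alpha(X_n)}=1.$$
   Context: $D_r=\{x\in\mathbb N:\ d\mid x \text{ for some } d\in\{2,3,\dots,r\}\}$. $X_n$ is the graph on $\{0,\dots,n-1\}$ with $a,b$ adjacent iff $\gcd(a-b,n)=1$. $\alpha(G)$ is the independence number; $\mathrm{IR}(G)$ is the maximum size of an irredundant set, where $S$ is irredundant if every $v\in S$ has a vertex in $N[v]\setminus N[S\setminus\{v\}]$ (closed neighborhoods). *)

From HB Require Import structures.
From mathcomp Require Import all_boot all_order all_algebra.
Set Implicit Arguments. Unset Strict Implicit. Unset Printing Implicit Defensive.
Import Order.TTheory GRing.Theory Num.Theory.

Definition inD (r x : nat) : Prop := exists d, (2 <= d <= r)%N /\ (d %| x)%N.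

Definition ndist (a b : nat) : nat := maxn (a - b) (b - a).

(* unitary Cayley graph X_n on {0,...,n-1}: a ~ b iff gcd(a-b, n) = 1
   (restricted to a != b: a simple graph; for n >= 2 this is automatic) *)
Definition Xadj (n : nat) : rel 'I_n :=
  fun a b => (a != b) && (gcdn (ndist a b) n == 1)%N.

Arguments Xadj n : clear implicits.

Section Graph.
Variables (T : finType) (adj : rel T).

Definition cnbhd (v : T) : {set T} := [set u | (u == v) || adj v u].
Definition cnbhdS (S : {set T}) : {set T} := \bigcup_(x in S) cnbhd x.

Definition independent (S : {set T}) : bool :=
  [forall x in S, forall y in S, ~~ adj x y].

Definition irredundant (S : {set T}) : bool :=
  [forall v in S, exists w, (w \in cnbhd v) && (w \notin cnbhdS (S :\ v))].

Definition alpha : nat := \max_(S : {set T} | independent S) #|S|.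
Definition IR : nat := \max_(S : {set T} | irredundant S) #|S|.
End Graph.

From HB Require Import structures.
From mathcomp Require Import all_boot all_order all_algebra.
From mathcomp Require Import zify.
Import Order.TTheory GRing.Theory Num.Theory.

Set Implicit Arguments.
Unset Strict Implicit.
Unset Printing Implicit Defensive.

(* Let A = alpha(X_n), I = IR(X_n), and let d in {2..r}
   divide n.  Every independent set is irredundant, so A <= I.  The multiples
   of d form an independent set of X_n, so n <= d * A <= r * A.  For the upper
   bound, split an irredundant set S into its isolated part (vertices with no
   neighbour in S, an independent set, hence of size <= A) and its core.
   Encode a vertex x of X_n by the set of pairs (p, x mod p), p a prime divisor
   of n: adjacent vertices get disjoint codes, distinct non-adjacent vertices
   get intersecting ones.  Pairing each core vertex v with the code of a
   private neighbour of v yields a "skew cross-intersecting" family of set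
   pairs, and the counting form of Bollobas' set-pair inequality bounds the
   core by 4^omega(n).  Hence A <= I <= A + 4^omega(n); since
   16^omega(n) <= 16^6 n, we get 4^omega(n) = o(n) = o(A) and I/A -> 1.
   The file develops, in order: the counting inequality for set pairs, the
   general irredundance bound for graphs with a disjointness encoding, the
   encoding and the independent set of X_n, the estimate on omega(n), and
   finally the limit. *)

Lemma sum_card_disjoint (I V : finType) (P : {set I}) (F : I -> {set V}) :
  {in P &, forall i j, i != j -> [disjoint F i & F j]} ->
  \sum_(i in P) #|F i| <= #|V|.
Proof.
move=> disjF.
under eq_bigr => i _ do rewrite -sum1_card big_mkcond /=.
rewrite exchange_big /= -[#|V|]sum1_card; apply: leq_sum => x _.
case: (pickP (fun i => (i \in P) && (x \in F i))) => [i0 /andP[i0P xi0] | none].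
  rewrite (bigD1 i0) //= xi0 big1 // => i /andP[iP ii0]; case: ifP => // xi.
  by have /disjoint_setI0/setP/(_ x) := disjF i i0 iP i0P ii0; rewrite !inE xi xi0.
by rewrite big1 // => i iP; case: ifP => // xi; have := none i; rewrite iP xi.
Qed.

(* The sets containing A and avoiding B (with A, B disjoint) correspond to the
   subsets of the complement of A :|: B. *)
Lemma card_sets_between (U : finType) (A B : {set U}) : [disjoint A & B] ->
  2 ^ #|~: (A :|: B)| <= #|[set R : {set U} | (A \subset R) && [disjoint B & R]]|.
Proof.
move=> dAB; rewrite -card_powerset -(@card_in_imset _ _ (fun Q => Q :|: A)).
  apply: subset_leq_card; apply/subsetP => _ /imsetP[Q QC ->].
  rewrite powersetE in QC; rewrite inE subsetUr disjoint_sym disjoints_subset.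
  rewrite subUset -[A \subset _]disjoints_subset dAB andbT.
  by rewrite (subset_trans QC) // setCS subsetUr.
move=> Q1 Q2; rewrite !inE => s1 s2 e; apply/setP => x; move/setP: e => /(_ x).
rewrite !inE; case xA: (x \in A); last by rewrite !orbF.
have /negPf-> : x \notin Q1 by apply/negP => /(subsetP s1); rewrite !inE xA.
by have /negPf-> : x \notin Q2 by apply/negP => /(subsetP s2); rewrite !inE xA.
Qed.

(* If A i, B i are disjoint, A i meets B j for i != j, and
   #|A i| + #|B i| <= m, then there are at most 2^m indices: the families of
   sets sandwiched between A i and ~: B i are pairwise disjoint, and each has
   at least 2^(#|U| - m) members. *)
Lemma set_pairs_bound (I U : finType) (P : {set I}) (A B : I -> {set U}) m :
  (forall i, i \in P -> #|A i| + #|B i| <= m) ->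
  (forall i, i \in P -> [disjoint A i & B i]) ->
  {in P &, forall i j, i != j -> ~~ [disjoint A i & B j]} ->
  #|P| <= 2 ^ m.
Proof.
move=> cardAB dAB meetAB.
pose F i := [set R : {set U} | (A i \subset R) && [disjoint B i & R]].
have FP i : i \in P -> 2 ^ (#|U| - m) <= #|F i|.
  move=> iP; apply: leq_trans _ (card_sets_between (dAB i iP)).
  rewrite leq_pexp2l // cardsCs setCK.
  by rewrite leq_sub2l // cardsU; have := cardAB i iP; lia.
have disjF : {in P &, forall i j, i != j -> [disjoint F i & F j]}.
  move=> i j iP jP ij; rewrite -setI_eq0; apply/set0Pn => -[R].
  rewrite !inE => /andP[/andP[AiR _] /andP[_ dBjR]].
  have /negP := meetAB i j iP jP ij; apply.
  by apply: disjointWl AiR _; rewrite disjoint_sym.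
have sumF := sum_card_disjoint disjF.
rewrite -cardsT -powersetT card_powerset cardsT in sumF.
have count_sets : #|P| * 2 ^ (#|U| - m) <= 2 ^ #|U|.
  by rewrite -sum_nat_const; apply: leq_trans sumF; apply: leq_sum.
have split_pow : 2 ^ #|U| <= 2 ^ (#|U| - m) * 2 ^ m.
  by rewrite -expnD leq_pexp2l // addnC -leq_subLR.
rewrite -(leq_pmul2r (expn_gt0 2 #|U|)).
apply: leq_trans (_ : #|P| * (2 ^ (#|U| - m) * 2 ^ m) <= _).
  by rewrite leq_mul2l split_pow orbT.
by rewrite mulnA mulnC leq_mul2l count_sets orbT.
Qed.

Section Irredundance.
Variables (T : finType) (adj : rel T).
Hypothesis adj_sym : symmetric adj.

Definition core (S : {set T}) : {set T} :=
  [set v in S | [exists u in S, adj v u]].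

(* Independent sets are irredundant: each vertex is its own private neighbour. *)
Lemma independent_irredundant (S : {set T}) :
  independent adj S -> irredundant adj S.
Proof.
move=> indS; apply/forallP => v; apply/implyP => vS; apply/existsP; exists v.
rewrite inE eqxx /=; apply/bigcupP => -[u]; rewrite !inE => /andP[uv uS].
case/orP => [/eqP vu | auv]; first by rewrite vu eqxx in uv.
by move/forallP: indS => /(_ u); rewrite uS => /forallP/(_ v); rewrite vS auv.
Qed.

Lemma alpha_le_IR : alpha adj <= IR adj.
Proof.
apply/bigmax_leqP => S indS; apply: leq_bigmax_cond.
exact: independent_irredundant.
Qed.

Lemma independent_setD_core (S : {set T}) : independent adj (S :\: core S).
Proof.
apply/forallP => x; apply/implyP; rewrite !inE => /andP[xcore xS].
apply/forallP => y; apply/implyP; rewrite !inE => /andP[_ yS].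
by apply: contra xcore => axy; rewrite xS; apply/existsP; exists y; rewrite yS.
Qed.

Definition private_nbr (S : {set T}) (v w : T) : bool :=
  adj v w && [forall u in S, (u != v) ==> (u != w) && ~~ adj u w].

Lemma private_neighbour (S : {set T}) v : irredundant adj S -> v \in core S ->
  exists w, private_nbr S v w.
Proof.
move=> irrS; rewrite inE => /andP[vS /existsP[u0 /andP[u0S avu0]]].
move/forallP: irrS => /(_ v); rewrite vS => /existsP[w /andP[wNv wNS]].
have priv u : u \in S -> u != v -> (u != w) && ~~ adj u w.
  move=> uS uv; rewrite -negb_or; apply: contra wNS => uw.
  by apply/bigcupP; exists u; rewrite !inE ?uv // eq_sym.
have avw : adj v w.
  move: wNv; rewrite inE => /orP[/eqP wv|//].
  have [/eqP u0v | u0v] := boolP (u0 == v); first by rewrite wv -{2}u0v.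
  by have := priv u0 u0S u0v; rewrite wv adj_sym avu0 andbF.
exists w; rewrite /private_nbr avw.
by apply/forall_inP => u uS; apply/implyP; apply: priv.
Qed.

(* The isolated part is bounded by alpha, so IR exceeds alpha by at most a
   uniform bound on the cores of irredundant sets. *)
Lemma IR_le_alpha_add b :
  (forall S, irredundant adj S -> #|core S| <= b) -> IR adj <= alpha adj + b.
Proof.
move=> coreb; apply/bigmax_leqP => S irrS.
rewrite -(cardsID (core S) S) addnC leq_add ?coreb //.
  by apply: leq_bigmax_cond; apply: independent_setD_core.
by apply: leq_trans (subset_leq_card (subsetIr _ _)) (coreb S irrS).
Qed.

Variables (U : finType) (code : T -> {set U}) (k : nat).
Hypothesis card_code : forall x, #|code x| <= k.
Hypothesis code_adj : forall x y, adj x y -> [disjoint code x & code y].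
Hypothesis code_nonadj :
  forall x y, x != y -> ~~ adj x y -> ~~ [disjoint code x & code y].

(* Pair each core vertex v with (code v, code w), w a private neighbour of v;
   these pairs satisfy the hypotheses of set_pairs_bound. *)
Lemma core_bound (S : {set T}) : irredundant adj S -> #|core S| <= 4 ^ k.
Proof.
move=> irrS.
pose W v := odflt v [pick w | private_nbr S v w].
have W_spec v : v \in core S -> private_nbr S v (W v).
  move=> vcore; rewrite /W; case: pickP => [// | none].
  by have [w] := private_neighbour irrS vcore; rewrite none.
have coreS v : v \in core S -> v \in S by rewrite inE => /andP[].
rewrite (_ : 4 = 2 ^ 2) // -expnM.
apply: (set_pairs_bound (B := fun v => code (W v))) => [v _ | v vc | u v uc vc uv].
- by rewrite mul2n -addnn leq_add.
- by apply: code_adj; case/andP: (W_spec v vc).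
- case/andP: (W_spec v vc) => _ /forall_inP/(_ u (coreS u uc)).
  by rewrite uv => /andP[uW nadj]; apply: code_nonadj.
Qed.

End Irredundance.

Lemma ndistC a b : ndist a b = ndist b a.
Proof. by rewrite /ndist maxnC. Qed.

Lemma Xadj_sym n : symmetric (Xadj n).
Proof. by move=> a b; rewrite /Xadj eq_sym ndistC. Qed.

Lemma dvdn_ndist d a b : (d %| ndist a b) = (a == b %[mod d]).
Proof.
rewrite /ndist; case: (leqP a b) => [ab | /ltnW ba].
  by rewrite (eqP (_ : a - b == 0)) ?subn_eq0 // max0n eq_sym eqn_mod_dvd.
by rewrite (eqP (_ : b - a == 0)) ?subn_eq0 // maxn0 eqn_mod_dvd.
Qed.

(* For d > 1 dividing n, the multiples of d form an independent set of X_n of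
   size n %/ d: their differences are all divisible by d. *)
Lemma alpha_Xadj_ge n d : 1 < d -> d %| n -> n %/ d <= alpha (Xadj n).
Proof.
move=> d1 dn; have d0 : 0 < d by apply: ltnW.
have mult_lt (j : 'I_(n %/ d)) : j * d < n by rewrite -{2}(divnK dn) ltn_pmul2r.
pose mult (j : 'I_(n %/ d)) : 'I_n := Ordinal (mult_lt j).
have mult_inj : injective mult.
  by move=> j j' /(congr1 val) /eqP; rewrite /= eqn_pmul2r // => /eqP /val_inj.
rewrite -[n %/ d]card_ord -(card_imset _ mult_inj); apply: leq_bigmax_cond.
apply/forallP => x; apply/implyP => /imsetP[j _ ->].
apply/forallP => y; apply/implyP => /imsetP[j' _ ->].
rewrite /Xadj negb_and orbC -/(coprime _ _); apply/orP; left.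
apply: contraTN d1 => cop; rewrite -leqNgt dvdn_leq // -(eqP cop) dvdn_gcd dn.
by rewrite dvdn_ndist !modnMl.
Qed.

Section Encoding.
Variable n : nat.

Definition prime_divs : {set 'I_n.+1} := [set p : 'I_n.+1 | val p \in primes n].

Definition residues (x : nat) : {set 'I_n.+1 * 'I_n.+1} :=
  [set (p, inord (x %% p)) | p : 'I_n.+1 in prime_divs].

Lemma card_prime_divs : #|prime_divs| <= size (primes n).
Proof.
rewrite cardE -(size_map val); apply: uniq_leq_size.
  by rewrite map_inj_uniq ?enum_uniq //; apply: val_inj.
by move=> x /mapP[p]; rewrite mem_enum inE => pP ->.
Qed.

Lemma card_residues x : #|residues x| <= #|prime_divs|.
Proof. exact: leq_imset_card. Qed.

Lemma residue_eq (p : 'I_n.+1) a b : 0 < p ->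
  (inord (a %% p) == inord (b %% p) :> 'I_n.+1) = (a == b %[mod p]).
Proof.
move=> p0; have modp x : x %% p <= n.
  by rewrite -ltnS (leq_trans (ltn_pmod _ p0)) // ltnW.
by apply/eqP/eqP => [/(congr1 val) /=|->] //; rewrite !inordK ?ltnS.
Qed.

Lemma residues_coprime a b :
  coprime (ndist a b) n -> [disjoint residues a & residues b].
Proof.
move=> cop; rewrite -setI_eq0; apply/set0Pn => -[_ /setIP[/imsetP[p pP ->]]].
case/imsetP=> q _ [<-]; move: pP; rewrite inE mem_primes => /and3P[pp _ pn].
move/eqP; rewrite residue_eq ?prime_gt0 // -dvdn_ndist => pdist.
by move: (prime_gt1 pp); rewrite ltnNge dvdn_leq // -(eqP cop) dvdn_gcd pdist.
Qed.

Lemma residues_not_coprime a b : 0 < n -> ~~ coprime (ndist a b) n ->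
  ~~ [disjoint residues a & residues b].
Proof.
move=> n0 ncop; rewrite -setI_eq0; apply/set0Pn.
set g := gcdn (ndist a b) n.
have g1 : 1 < g.
  by move: ncop; rewrite /coprime -/g ltn_neqAle gcdn_gt0 n0 orbT eq_sym => ->.
have [pp pg] := (pdiv_prime g1, pdiv_dvd g).
have pn : pdiv g %| n by apply: dvdn_trans pg (dvdn_gcdr _ _).
have pdist : pdiv g %| ndist a b by apply: dvdn_trans pg (dvdn_gcdl _ _).
have pltn : pdiv g < n.+1 by rewrite ltnS dvdn_leq.
pose p : 'I_n.+1 := Ordinal pltn.
have pP : p \in prime_divs by rewrite inE mem_primes pp n0.
exists (p, inord (a %% p)); rewrite inE.
apply/andP; split; apply/imsetP; exists p => //.
by congr (_, _); apply/eqP; rewrite residue_eq ?prime_gt0 // -dvdn_ndist.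
Qed.

Lemma core_Xadj_bound (S : {set 'I_n}) : irredundant (Xadj n) S ->
  #|core (Xadj n) S| <= 4 ^ size (primes n).
Proof.
move=> irrS; apply: leq_trans (leq_pexp2l _ card_prime_divs) => //.
apply: (core_bound (@Xadj_sym n) (code := fun x : 'I_n => residues x)) => //.
- by move=> x; apply: card_residues.
- by move=> x y /andP[_]; apply: residues_coprime.
- move=> x y xy nadj; apply: residues_not_coprime.
    exact: leq_ltn_trans (leq0n x) (ltn_ord x).
  by move: nadj; rewrite /Xadj xy.
Qed.

End Encoding.

Lemma IR_Xadj_le n : IR (Xadj n) <= alpha (Xadj n) + 4 ^ size (primes n).
Proof. by apply: IR_le_alpha_add => S; apply: core_Xadj_bound. Qed.

(* Primes below 16 contribute a factor 16, the others at least 16 each. *)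
Lemma pow16_le_prod (s : seq nat) : all prime s ->
  16 ^ size s <= 16 ^ count (fun p => p < 16) s * \prod_(p <- s) p.
Proof.
elim: s => [|p s IH] /=; first by rewrite big_nil.
case/andP=> pp /IH {}IH; rewrite big_cons expnS.
have := prime_gt1 pp; case: (ltnP p 16) => /= h p1.
  by rewrite add1n expnS; nia.
by rewrite add0n; nia.
Qed.

(* Only the six primes 2, 3, 5, 7, 11, 13 lie below 16. *)
Lemma count_small_primes n : count (fun p => p < 16) (primes n) <= 6.
Proof.
rewrite -size_filter (_ : 6 = size [seq p <- iota 0 16 | prime p]) //.
apply: uniq_leq_size; first by rewrite filter_uniq // primes_uniq.
move=> p; rewrite mem_filter mem_primes => /and3P[p16 pp _].
by rewrite mem_filter pp mem_iota.
Qed.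

Lemma prod_primes_dvdn n : \prod_(p <- primes n) p %| n.
Proof.
have: all (fun p => prime p && (p %| n)) (primes n).
  by apply/allP => p; rewrite mem_primes => /and3P[-> _ ->].
elim: (primes n) (primes_uniq n) => [|p s IH] /=; first by rewrite big_nil dvd1n.
case/andP=> ps us /andP[/andP[pp pn] al]; rewrite big_cons Gauss_dvd ?pn ?IH //.
rewrite prime_coprime // Euclid_dvd_prod // big_has_cond.
apply/hasP => -[q qs /andP[_]]; have /allP/(_ q qs)/andP[qp _] := al.
by rewrite dvdn_prime2 // => /eqP pq; rewrite pq qs in ps.
Qed.

Lemma pow16_omega n : 0 < n -> 16 ^ size (primes n) <= 16 ^ 6 * n.
Proof.
move=> n0; have primes_prime : all prime (primes n).
  by apply/allP => p; rewrite mem_primes => /andP[].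
apply: leq_trans (pow16_le_prod primes_prime) _; apply: leq_mul.
  by rewrite leq_exp2l // count_small_primes.
exact: dvdn_leq (prod_primes_dvdn n).
Qed.

Lemma pow4_omega_small n c : 16 ^ 6 * c ^ 2 < n -> 4 ^ size (primes n) * c < n.
Proof.
move=> hn; have n0 : 0 < n by apply: leq_ltn_trans _ hn.
have hB : (4 ^ size (primes n)) ^ 2 <= 16 ^ 6 * n.
  by rewrite -expnM [_ * 2]mulnC expnM (_ : 4 ^ 2 = 16) // pow16_omega.
rewrite -(ltn_exp2r _ _ (isT : 0 < 2)) expnMn.
apply: (@leq_ltn_trans (16 ^ 6 * n * c ^ 2)); first by rewrite leq_mul2r hB orbT.
by rewrite mulnAC -mulnn ltn_pmul2r.
Qed.

Local Open Scope ring_scope.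

Lemma ratio_close (R : realFieldType) (A I B m : nat) (eps : R) :
  0 < eps -> eps^-1 < m%:R -> (A <= I <= A + B)%N -> (B * m < A)%N ->
  `| I%:R / A%:R - 1 | < eps.
Proof.
move=> eps0 epsm /andP[AI IAB] BmA.
have A0 : 0 < A%:R :> R by rewrite ltr0n (leq_ltn_trans _ BmA).
have IA : 1 <= I%:R / A%:R :> R by rewrite ler_pdivlMr // mul1r ler_nat.
rewrite ger0_norm ?subr_ge0 // ltrBlDr ltr_pdivrMr // mulrDl mul1r addrC.
apply: (@le_lt_trans _ _ (A + B)%:R); first by rewrite ler_nat.
rewrite natrD ltrD2l; apply: (@le_lt_trans _ _ (B%:R * (eps * m%:R))).
  rewrite ler_peMr ?ler0n // -ler_pdivrMl // mulr1 ltW //.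
by rewrite mulrCA ltr_pM2l // -natrM ltr_nat.
Qed.

Unset Implicit Arguments.

Theorem corollary5p6 (r : nat) (hr : (2 <= r)%N) :
  forall eps : rat, 0 < eps ->
  exists N : nat, forall n : nat, (N <= n)%N -> inD r n ->
    `| (IR (Xadj n))%:R / (alpha (Xadj n))%:R - 1 | < eps.
Proof.
move=> eps eps0; set m := Num.bound eps^-1.
have epsm : eps^-1 < m%:R by apply: archi_boundP; rewrite invr_ge0 ltW.
exists (16 ^ 6 * (r * m) ^ 2).+1 => n hn [d [/andP[d1 dr] dn]].
have A_ge := alpha_Xadj_ge d1 dn.
have n_le : (n <= alpha (Xadj n) * r)%N by rewrite -{1}(divnK dn) leq_mul.
have Bm : (4 ^ size (primes n) * m < alpha (Xadj n))%N.
  rewrite -(ltn_pmul2r (leq_trans _ hr)) //; apply: leq_trans n_le.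
  by rewrite mulnAC -mulnA pow4_omega_small.
apply: ratio_close Bm => //.
by rewrite alpha_le_IR IR_Xadj_le.
Qed.
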